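(* Let $G$ be a simple graph with a consistent link-coloring $c$ (in the sense of the context), and let $\alpha\neq\beta$ be two colors. Let $H$ be an $(\alpha,\beta)$ cycle, i.e. a cycle of $G$ all of whose links are colored $\alpha$ or $\beta$. If $H$ has an even number of edges, then $H$ contains an even number of variable edges; if $H$ has an odd number of edges, then $H$ contains an odd number of variable edges.
   Context: Let $G=(V,E)$ be a simple graph. Each edge $e_{i,j}=v_iv_j$ is regarded as consisting of two links (half-edges): $l_{i,j}$, incident to $v_i$, and $l_{j,i}$, incident to $v_j$. A coloring function is a map $c$ assigning to every link a color from a set $C$ of colors; write $c_{i,j}=c(l_{i,j})$, and the colored edge is the pair $(c_{i,j},c_{j,i})$. The colored edge is a constant if $c_{i,j}=c_{j,i}$ and a variable otherwise. The coloring is consistent if, at every vertex $v$, all links incident to $v$ receive distinct colors. For colors $\alpha\neq\beta$, an $(\alpha,\beta)$ cycle is a cycle in $G$ every link of which (both links of every edge of the cycle) has color in $\{\alpha,\beta\}$; its parity is the parity of its number of edges. *)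

From mathcomp Require Import all_boot.
Set Implicit Arguments. Unset Strict Implicit. Unset Printing Implicit Defensive.

Definition simple_graph (V : finType) (adj : rel V) : Prop :=
  symmetric adj /\ irreflexive adj.

(* A link coloring: c u v is the color c_{u,v} of the link l_{u,v} of edge uv
   incident to u (only meaningful when adj u v). *)
Definition link_coloring (V : finType) (C : eqType) := V -> V -> C.

Definition consistent (V : finType) (C : eqType) (adj : rel V)
    (c : link_coloring V C) : Prop :=
  forall v u w, adj v u -> adj v w -> u != w -> c v u != c v w.

Definition is_graph_cycle (V : finType) (adj : rel V) (p : seq V) : Prop :=
  3 <= size p /\ ucycle adj p.

Definition cycle_edges (V : finType) (p : seq V) : seq (V * V) :=
  zip p (rot 1 p).

Definition ab_cycle (V : finType) (C : eqType) (adj : rel V)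
    (c : link_coloring V C) (a b : C) (p : seq V) : Prop :=
  is_graph_cycle adj p /\
  all (fun e => (c e.1 e.2 \in [:: a; b]) && (c e.2 e.1 \in [:: a; b]))
      (cycle_edges p).

Definition variable_edge (V : finType) (C : eqType) (c : link_coloring V C)
    (e : V * V) : bool := c e.1 e.2 != c e.2 e.1.

Definition num_variable_edges (V : finType) (C : eqType)
    (c : link_coloring V C) (p : seq V) : nat :=
  count (variable_edge c) (cycle_edges p).

From mathcomp Require Import all_boot.

Set Implicit Arguments.
Unset Strict Implicit.
Unset Printing Implicit Defensive.

(* Around the cycle, every vertex has exactly one incident link of color alpha,
   its two incident links being distinct colors in {alpha, beta}; so the cycle
   carries as many alpha-links as edges.  A constant edge carries 0 or 2 of
   them and a variable edge exactly 1, hence the number of variable edges has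
   the parity of the number of alpha-links, i.e. of the length of the cycle. *)

Lemma odd_count_neq (T : Type) (f g : pred T) (s : seq T) :
  odd (count (fun x => f x != g x) s) = odd (count f s) (+) odd (count g s).
Proof.
elim: s => //= x s IHs; rewrite !oddD IHs.
by case: (f x); case: (g x); case: (odd (count f s)); case: (odd (count g s)).
Qed.

Lemma neq_in_pair (T : eqType) (a b y z : T) :
  a != b -> y \in [:: a; b] -> z \in [:: a; b] ->
  (y != z) = ((y == a) != (z == a)).
Proof.
move=> neq_ab; rewrite !inE.
by case/orP=> /eqP-> /orP[]/eqP->; rewrite ?eqxx // [b == a]eq_sym (negPf neq_ab).
Qed.

Section NextPrev.

Variables (T : eqType) (p : seq T).
Hypothesis p_uniq : uniq p.

Lemma map_next_rot1 : map (next p) p = rot 1 p.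
Proof.
case: p p_uniq => // x t uniq_xt.
apply: (@eq_from_nth _ x); first by rewrite size_map size_rot.
move=> i; rewrite size_map => lt_i_p.
rewrite (nth_map x) // rot1_cons nth_rcons next_nth mem_nth // index_uniq //=.
by have [//|ge_i_t] := ltnP i (size t); rewrite nth_default // if_same.
Qed.

Lemma count_next_prev (a : rel T) :
  count (fun x => a (next p x) x) p = count (fun y => a y (prev p y)) p.
Proof.
have /permP rot_count : perm_eq (rot 1 p) p by rewrite perm_rot.
rewrite -[RHS]rot_count -map_next_rot1 count_map.
by apply: eq_count => x /=; rewrite prev_next.
Qed.

Lemma next_neq_prev x : 2 < size p -> x \in p -> next p x != prev p x.
Proof.
move=> size_p /rot_to[i s def_s].
rewrite -(next_rot i p_uniq) -(prev_rot i p_uniq) def_s.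
have: uniq (x :: s) by rewrite -def_s rot_uniq.
have: 2 < size (x :: s) by rewrite -def_s size_rot.
case: s {def_s} => [|y s] //; case/lastP: s => [|s z] // _ uniq_s.
case/andP: uniq_s => x_notin /andP[y_notin _].
set t := y :: rcons s z in x_notin *.
rewrite prev_nth mem_head memNindex // -[size t]/(size (x :: t)).-1 nth_last.
rewrite /next /= eqxx last_rcons.
by apply: contraNneq y_notin => ->; rewrite mem_rcons mem_head.
Qed.

End NextPrev.

Lemma cycle_edges_next (V : finType) (p : seq V) :
  uniq p -> cycle_edges p = [seq (x, next p x) | x <- p].
Proof.
by move=> p_uniq; rewrite /cycle_edges -map_next_rot1 // -{1}(map_id p) zip_map.
Qed.

Section AlphaBetaCycle.

Variables (V : finType) (C : eqType) (adj : rel V) (c : link_coloring V C).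
Variables (alpha beta : C) (p : seq V).
Hypotheses (adj_sym : symmetric adj) (c_consistent : consistent adj c).
Hypotheses (neq_ab : alpha != beta) (p_ab : ab_cycle adj c alpha beta p).

Let p_uniq : uniq p. Proof. by case: p_ab => [[_ /andP[]]]. Qed.

Lemma ab_link_colors x : x \in p ->
  (c x (next p x) \in [:: alpha; beta]) && (c (next p x) x \in [:: alpha; beta]).
Proof.
case: p_ab => _ /allP all_ab x_p.
by apply: (all_ab (x, next p x)); rewrite cycle_edges_next // map_f.
Qed.

Lemma alpha_link_unique y : y \in p ->
  (c y (next p y) == alpha) != (c y (prev p y) == alpha).
Proof.
case: p_ab => [[size_p /andP[p_cycle _]] _] y_p.
have /andP[next_ab _] := ab_link_colors y_p.
have /ab_link_colors/andP[_ prev_ab] : prev p y \in p by rewrite mem_prev.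
rewrite next_prev // in prev_ab.
rewrite -(neq_in_pair neq_ab) //; apply: c_consistent.
- exact: next_cycle.
- by rewrite adj_sym; apply: prev_cycle.
- exact: next_neq_prev.
Qed.

Lemma odd_num_variable_edges :
  odd (num_variable_edges c p) = odd (size (cycle_edges p)).
Proof.
pose alpha_next x := c x (next p x) == alpha.
have variableE x : x \in p ->
    variable_edge c (x, next p x) = (alpha_next x != (c (next p x) x == alpha)).
  case/ab_link_colors/andP=> x_ab next_ab.
  by rewrite /variable_edge (neq_in_pair neq_ab).
rewrite /num_variable_edges cycle_edges_next // count_map size_map.
rewrite (eq_in_count variableE) odd_count_neq.
rewrite (count_next_prev p_uniq (fun y x => c y x == alpha)) -odd_count_neq.
rewrite -count_predT; congr odd.
by apply: eq_in_count => y /alpha_link_unique.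
Qed.

End AlphaBetaCycle.

Theorem lemma1 (V : finType) (C : eqType) (adj : rel V)
    (c : link_coloring V C) (alpha beta : C) (p : seq V) :
  simple_graph adj ->
  consistent adj c ->
  alpha != beta ->
  ab_cycle adj c alpha beta p ->
  (~~ odd (size (cycle_edges p)) -> ~~ odd (num_variable_edges c p)) /\
  (odd (size (cycle_edges p)) -> odd (num_variable_edges c p)).
Proof.
move=> [adj_sym _] c_consistent neq_ab p_ab.
by rewrite (odd_num_variable_edges adj_sym c_consistent neq_ab p_ab).
Qed.
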